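(* In the central objective estimation setting described in the context, for every $t$, \[ \mathbb{E}\|g^{0,b}_t(\theta^c_t)\|^2\le2\,\mathbb{E}\|\Delta\theta^c_t\|^2+2\sigma^2n^{-1}. \]
   Context: $n$ agents with environment distributions $\mu^i$ on $\mathcal{S}$, $\mu^0=\frac1n\sum_i\mu^i$; shared $\Phi:\mathcal{S}\to\mathbb{R}^{d\times d}$ with $\|\Phi(s)\|\le1$, $\bar\Phi^0=\mathbb{E}_{\mu^0}\Phi(s)$ with $\frac12(\bar\Phi^0+(\bar\Phi^0)^T)\succ0$; objectives $b^i(s)=\Phi(s)\theta^i_*$; $\bar b^0=\frac1n\sum_i\mathbb{E}_{\mu^i}b^i(s)$; $\theta^c_*$ solves $\bar\Phi^0\theta^c_*=\bar b^0$. Constants: $G_b=\max\{\max_i\|\theta^i_*\|,\|\theta^c_*\|\}$, $G_A\ge\sup_s\|A(s)\|$ for a shared feature map $A$, $G_x\ge0$, and $\sigma=2\max\{G_AG_x,G_b\}$ (so in particular $\sigma\ge2G_b$). Iteration: at each step each agent $i$ draws $s^i_t\sim\mu^i$ independently of everything else, $g^{0,b}_t(\theta)=\frac1n\sum_{i=1}^n(\Phi(s^i_t)\theta-b^i(s^i_t))$, $\theta^c_{t+1}=\theta^c_t-\alpha^b_tg^{0,b}_t(\theta^c_t)$ with deterministic step sizes and arbitrary $\theta^c_0$; $\Delta\theta^c_t=\theta^c_t-\theta^c_*$. *)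

From HB Require Import structures.
From mathcomp Require Import all_boot all_order all_algebra.
From mathcomp Require Import all_classical all_reals all_analysis.
Set Implicit Arguments. Unset Strict Implicit. Unset Printing Implicit Defensive.
Import Order.TTheory GRing.Theory Num.Theory.
Local Open Scope classical_set_scope.
Local Open Scope ring_scope.

Definition vnorm {R : realType} {d : nat} (v : 'cV[R]_d) : R :=
  Num.sqrt (\sum_(i < d) v i 0 ^+ 2).

Definition opnorm_le {R : realType} {p q : nat} (M : 'M[R]_(p, q)) (c : R) : Prop :=
  forall x : 'cV[R]_q, vnorm (M *m x) <= c * vnorm x.

Definition mexp {R : realType} {dS} {S : measurableType dS} {p q : nat}
  (mu : {measure set S -> \bar R}) (F : S -> 'M[R]_(p, q)) : 'M[R]_(p, q) :=
  \matrix_(a, b) Rintegral mu setT (fun s => F s a b).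

Definition mutually_independent {R : realType} {dT} {T : measurableType dT}
  {dS} {S : measurableType dS} {I : eqType}
  (P : probability T R) (X : I -> T -> S) : Prop :=
  forall (J : seq I) (A : I -> set S), uniq J ->
    (forall j, j \in J -> measurable (A j)) ->
    P (\big[setI/setT]_(j <- J) (X j @^-1` A j)) =
    (\prod_(j <- J) P (X j @^-1` A j))%E.

Definition has_distribution {R : realType} {dT} {T : measurableType dT}
  {dS} {S : measurableType dS} (P : probability T R) (X : T -> S)
  (mu : probability S R) : Prop :=
  forall A, measurable A -> P (X @^-1` A) = mu A.

Definition g0b {R : realType} {S : Type} {n d : nat}
  (Phi : S -> 'M[R]_d) (thstar : 'I_n -> 'cV[R]_d)
  (smp : 'I_n -> S) (theta : 'cV[R]_d) : 'cV[R]_d :=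
  n%:R^-1 *: \sum_(i < n) (Phi (smp i) *m theta - Phi (smp i) *m thstar i).

Fixpoint theta_c {R : realType} {T S : Type} {n d : nat}
  (Phi : S -> 'M[R]_d) (thstar : 'I_n -> 'cV[R]_d)
  (s : 'I_n -> nat -> T -> S) (alpha : nat -> R) (theta0 : 'cV[R]_d)
  (t : nat) (w : T) : 'cV[R]_d :=
  match t with
  | 0%N => theta0
  | t'.+1 => let th := theta_c Phi thstar s alpha theta0 t' w in
             th - alpha t' *: g0b Phi thstar (fun i => s i t' w) th
  end.

From HB Require Import structures.
From mathcomp Require Import all_boot all_order all_algebra.
From mathcomp Require Import all_classical all_reals all_analysis.
From mathcomp Require Import measurable_realfun ring lra.
Import Order.TTheory GRing.Theory Num.Theory.
Set Implicit Arguments. Unset Strict Implicit. Unset Printing Implicit Defensive.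
Local Open Scope classical_set_scope.
Local Open Scope ring_scope.

(* Split g = n^-1 sum_i Phi(s_i) (theta - thc) + B with
   B = n^-1 sum_i Phi(s_i) (thc - thstar_i).  As ||Phi|| <= 1, the first part has
   squared norm at most ||theta - thc||^2, so ||g||^2 <= 2 ||theta - thc||^2 + 2 ||B||^2
   pointwise.  The summands Y_i of n B are independent across agents, satisfy
   ||Y_i|| <= 2 G_b, and their means add up to zero exactly because thc solves
   Phibar0 thc = bbar0.  Coordinatewise, independence turns the cross terms of
   E ||sum_i Y_i||^2 into products of means, which contribute
   (sum_i E Y_i)^2 - sum_i (E Y_i)^2 <= 0; hence E ||B||^2 <= 4 G_b^2 / n <= sigma^2 / n.
   Nothing is needed about the dependence of theta_t on the current samples. *)

Definition sqnorm {R : realType} {d : nat} (v : 'cV[R]_d) : R :=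
  \sum_(k < d) v k 0 ^+ 2.

Lemma sqr_sum_le (R : realDomainType) n (x : 'I_n -> R) :
  (\sum_i x i) ^+ 2 <= n%:R * \sum_i x i ^+ 2.
Proof.
have sq_sum : (\sum_i x i) ^+ 2 = \sum_i \sum_j x i * x j.
  by rewrite expr2 mulr_suml; apply: eq_bigr => i _; rewrite mulr_sumr.
have const i : \sum_(j < n) x i ^+ 2 = n%:R * x i ^+ 2.
  by rewrite sumr_const card_ord mulr_natl.
have : 0 <= \sum_i \sum_j (x i - x j) ^+ 2.
  by apply: sumr_ge0 => i _; apply: sumr_ge0 => j _; exact: sqr_ge0.
have -> : \sum_i \sum_j (x i - x j) ^+ 2 =
    \sum_i \sum_(j < n) x i ^+ 2 + \sum_(i < n) \sum_j x j ^+ 2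
    - 2 * \sum_i \sum_j x i * x j.
  rewrite mulr_sumr -big_split -sumrB /=; apply: eq_bigr => i _.
  by rewrite mulr_sumr -big_split -sumrB /=; apply: eq_bigr => j _; ring.
rewrite -sq_sum (eq_bigr _ (fun i _ => const i)) -mulr_sumr sumr_const card_ord.
rewrite -mulr_natl; lra.
Qed.

Section SquaredNorm.
Variables (R : realType) (d : nat).
Implicit Types (u v : 'cV[R]_d) (M : 'M[R]_d) (c : R).

Lemma sqnorm_ge0 v : 0 <= sqnorm v.
Proof. by apply: sumr_ge0 => k _; exact: sqr_ge0. Qed.

Lemma vnorm_ge0 v : 0 <= vnorm v.
Proof. exact: sqrtr_ge0. Qed.

Lemma vnorm_sqr v : vnorm v ^+ 2 = sqnorm v.
Proof. by rewrite /vnorm sqr_sqrtr // sqnorm_ge0. Qed.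

Lemma sqr_entry_le_sqnorm v k : v k 0 ^+ 2 <= sqnorm v.
Proof.
by rewrite /sqnorm (bigD1 k) //= lerDl; apply: sumr_ge0 => j _; exact: sqr_ge0.
Qed.

Lemma sqnormZ c v : sqnorm (c *: v) = c ^+ 2 * sqnorm v.
Proof. by rewrite /sqnorm mulr_sumr; apply: eq_bigr => k _; rewrite mxE exprMn. Qed.

Lemma sqnormN v : sqnorm (- v) = sqnorm v.
Proof. by rewrite -scaleN1r sqnormZ sqrrN expr1n mul1r. Qed.

Lemma sqnormD_le u v : sqnorm (u + v) <= 2 * sqnorm u + 2 * sqnorm v.
Proof.
rewrite /sqnorm !mulr_sumr -big_split; apply: ler_sum => k _; rewrite mxE -subr_ge0.
have -> : 2 * u k 0 ^+ 2 + 2 * v k 0 ^+ 2 - (u k 0 + v k 0) ^+ 2 =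
  (u k 0 - v k 0) ^+ 2 by ring.
exact: sqr_ge0.
Qed.

Lemma sqnormB_le u v : sqnorm (u - v) <= 2 * sqnorm u + 2 * sqnorm v.
Proof. by rewrite -(sqnormN v); exact: sqnormD_le. Qed.

Lemma sqnormB_le_bound G u v : vnorm u <= G -> vnorm v <= G -> sqnorm (u - v) <= 4 * G ^+ 2.
Proof.
have sqnorm_le (w : 'cV[R]_d) : vnorm w <= G -> sqnorm w <= G ^+ 2.
  move=> wG; rewrite -vnorm_sqr; apply: lerXn2r; rewrite ?nnegrE ?vnorm_ge0 //.
  exact: le_trans (vnorm_ge0 w) wG.
move=> /sqnorm_le uG /sqnorm_le vG; apply: le_trans (sqnormB_le u v) _; lra.
Qed.

Lemma sqnorm_sum_le n (y : 'I_n -> 'cV[R]_d) :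
  sqnorm (\sum_i y i) <= n%:R * \sum_i sqnorm (y i).
Proof.
rewrite /sqnorm exchange_big mulr_sumr /=; apply: ler_sum => k _.
rewrite summxE; exact: sqr_sum_le.
Qed.

Lemma sqnorm_delta (b : 'I_d) : sqnorm (delta_mx b (0 : 'I_1) : 'cV[R]_d) = 1.
Proof.
rewrite /sqnorm (bigD1 b) //= mxE !eqxx big1 ?addr0 ?expr1n // => j /negbTE jb.
by rewrite mxE jb /= expr0n.
Qed.

Lemma sqnorm_mulmx_le M c v :
  0 <= c -> opnorm_le M c -> sqnorm (M *m v) <= c ^+ 2 * sqnorm v.
Proof.
move=> c0 /(_ v) Mv; rewrite -!vnorm_sqr -exprMn.
by apply: lerXn2r; rewrite ?nnegrE ?vnorm_ge0 ?(mulr_ge0 c0 (vnorm_ge0 v)).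
Qed.

Lemma opnorm_le_entry M c a b : 0 <= c -> opnorm_le M c -> `|M a b| <= c.
Proof.
move=> c0 Mc; rewrite -(ler_pXn2r (n := 2)) ?nnegrE ?normr_ge0 // real_normK ?num_real //.
have -> : M a b = (M *m delta_mx b (0 : 'I_1)) a 0 by rewrite -colE mxE.
apply: le_trans (sqr_entry_le_sqnorm _ a) _.
by apply: le_trans (sqnorm_mulmx_le _ c0 Mc) _; rewrite sqnorm_delta mulr1.
Qed.

Lemma sqnorm_avg_mulmx_le n (Ms : 'I_n -> 'M[R]_d) u : (0 < n)%N ->
  (forall i, opnorm_le (Ms i) 1) -> sqnorm (n%:R^-1 *: \sum_i Ms i *m u) <= sqnorm u.
Proof.
move=> n_gt0 Ms1; have n0 : n%:R != 0 :> R by rewrite pnatr_eq0 -lt0n.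
have each i : sqnorm (Ms i *m u) <= sqnorm u.
  by have := sqnorm_mulmx_le u ler01 (Ms1 i); rewrite expr1n mul1r.
have sum_each : \sum_i sqnorm (Ms i *m u) <= n%:R * sqnorm u.
  rewrite mulr_natl -[n in _ *+ n]card_ord -sumr_const.
  by apply: ler_sum => i _; exact: each.
rewrite sqnormZ; apply: le_trans (ler_wpM2l (sqr_ge0 _) (sqnorm_sum_le _)) _.
apply: le_trans (ler_wpM2l (sqr_ge0 _) (ler_wpM2l (ler0n _ n) sum_each)) _.
by rewrite expr2 !mulrA mulfVK // mulVf // mul1r.
Qed.

Lemma g0b_sqnorm_le (S : Type) n (Phi : S -> 'M[R]_d) (thstar : 'I_n -> 'cV[R]_d)
    (smp : 'I_n -> S) (th thc : 'cV[R]_d) :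
  (0 < n)%N -> (forall x, opnorm_le (Phi x) 1) ->
  sqnorm (g0b Phi thstar smp th) <=
    2 * sqnorm (th - thc) + 2 / n%:R ^+ 2 * sqnorm (\sum_i Phi (smp i) *m (thc - thstar i)).
Proof.
move=> n_gt0 Phi1.
have -> : g0b Phi thstar smp th = n%:R^-1 *: \sum_i Phi (smp i) *m (th - thc)
    + n%:R^-1 *: \sum_i Phi (smp i) *m (thc - thstar i).
  rewrite /g0b -scalerDr -big_split /=; congr (_ *: _); apply: eq_bigr => i _.
  by rewrite !mulmxBr addrA subrK.
apply: le_trans (sqnormD_le _ _) _; apply: lerD.
  by rewrite ler_pM2l //; exact: (sqnorm_avg_mulmx_le _ n_gt0 (fun i => Phi1 (smp i))).
by rewrite sqnormZ exprVn mulrA.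
Qed.

End SquaredNorm.

Definition measurable_mxfun {dT} {T : measurableType dT} {R : realType} {p q : nat}
  (M : T -> 'M[R]_(p, q)) := forall a b, measurable_fun setT (fun w => M w a b).

Section MeasurableMatrixFunctions.
Context {dT : measure_display} {T : measurableType dT} {R : realType}.

Lemma measurable_mxfun_cst p q (M : 'M[R]_(p, q)) : measurable_mxfun (fun _ : T => M).
Proof. by move=> a b; exact: measurable_cst. Qed.

Lemma measurable_mxfunD p q (M N : T -> 'M[R]_(p, q)) :
  measurable_mxfun M -> measurable_mxfun N -> measurable_mxfun (fun w => M w + N w).
Proof. by move=> mM mN a b; under eq_fun do rewrite mxE; exact: measurable_funD. Qed.

Lemma measurable_mxfunN p q (M : T -> 'M[R]_(p, q)) :
  measurable_mxfun M -> measurable_mxfun (fun w => - M w).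
Proof. by move=> mM a b; under eq_fun do rewrite mxE; exact: measurableT_comp. Qed.

Lemma measurable_mxfunB p q (M N : T -> 'M[R]_(p, q)) :
  measurable_mxfun M -> measurable_mxfun N -> measurable_mxfun (fun w => M w - N w).
Proof. by move=> mM mN; apply: measurable_mxfunD => //; exact: measurable_mxfunN. Qed.

Lemma measurable_mxfunZ p q (c : R) (M : T -> 'M[R]_(p, q)) :
  measurable_mxfun M -> measurable_mxfun (fun w => c *: M w).
Proof. by move=> mM a b; under eq_fun do rewrite mxE; exact: measurable_funM. Qed.

Lemma measurable_mxfunM p q r (M : T -> 'M[R]_(p, q)) (N : T -> 'M[R]_(q, r)) :
  measurable_mxfun M -> measurable_mxfun N -> measurable_mxfun (fun w => M w *m N w).
Proof.
move=> mM mN a b; under eq_fun do rewrite mxE.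
by apply: measurable_sum => j; exact: measurable_funM.
Qed.

Lemma measurable_mxfun_sum n p q (M : 'I_n -> T -> 'M[R]_(p, q)) :
  (forall i, measurable_mxfun (M i)) -> measurable_mxfun (fun w => \sum_i M i w).
Proof.
move=> mM a b; under eq_fun do rewrite summxE.
by apply: measurable_sum => i; exact: mM.
Qed.

Lemma measurable_mxfun_comp {dS} {S : measurableType dS} p q (F : S -> 'M[R]_(p, q))
    (X : T -> S) :
  measurable_mxfun F -> measurable_fun setT X -> measurable_mxfun (fun w => F (X w)).
Proof. by move=> mF mX a b; exact: measurableT_comp (mF a b) mX. Qed.

Lemma measurable_sqnorm d (v : T -> 'cV[R]_d) :
  measurable_mxfun v -> measurable_fun setT (fun w => sqnorm (v w)).
Proof. by move=> mv; apply: measurable_sum => k; exact: measurable_funX. Qed.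

End MeasurableMatrixFunctions.

Section Integration.
Context {dT : measure_display} {T : measurableType dT} {R : realType}.

Lemma bounded_integrable (mu : probability T R) (f : T -> R) (M : R) :
  measurable_fun setT f -> (forall x, `|f x| <= M) -> mu.-integrable setT (EFin \o f).
Proof.
move=> mf fM; apply: measurable_bounded_integrable => //.
  exact/fin_num_fun_lty/fin_num_measure.
rewrite /bounded_near; near=> K => x _ /=; apply: le_trans (fM x) _.
by near: K; apply: nbhs_pinfty_ge; exact: num_real.
Unshelve. all: by end_near.
Qed.

Lemma ge0_integral_le_cst (P : probability T R) (f : T -> R) (K : R) :
  measurable_fun setT f -> (forall x, 0 <= f x <= K) -> (\int[P]_x (f x)%:E <= K%:E)%E.
Proof.
move=> mf fK; have -> : K%:E = (\int[P]_x (cst K%:E) x)%E.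
  by rewrite integral_cst //; have := probability_setT P; rewrite /= => ->; rewrite mule1.
apply: ge0_le_integral.
- exact: measurableT.
- by move=> x _; rewrite lee_fin; case/andP: (fK x).
- exact/measurable_EFinP.
- exact: measurable_cst.
- by move=> x _; rewrite lee_fin; case/andP: (fK x).
Qed.

Lemma ge0_integral_le_lincomb (mu : {measure set T -> \bar R}) (f g h : T -> R) (a b : R) :
  0 <= a -> 0 <= b ->
  measurable_fun setT f -> measurable_fun setT g -> measurable_fun setT h ->
  (forall x, 0 <= f x) -> (forall x, 0 <= g x) -> (forall x, 0 <= h x) ->
  (forall x, f x <= a * g x + b * h x) ->
  (\int[mu]_x (f x)%:E <= a%:E * \int[mu]_x (g x)%:E + b%:E * \int[mu]_x (h x)%:E)%E.
Proof.
move=> a0 b0 mf mg mh f0 g0 h0 fgh.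
have mE (k : T -> R) : measurable_fun setT k -> measurable_fun setT (fun x => (k x)%:E).
  by move=> mk; exact/measurable_EFinP.
have pE (k : T -> R) : (forall x, 0 <= k x) -> forall x, [set: T] x -> (0 <= (k x)%:E)%E.
  by move=> k0 x _; rewrite lee_fin.
have ag0 x : 0 <= a * g x by rewrite mulr_ge0.
have bh0 x : 0 <= b * h x by rewrite mulr_ge0.
have mag : measurable_fun setT (fun x => a * g x).
  by apply: measurable_funM => //; exact: measurable_cst.
have mbh : measurable_fun setT (fun x => b * h x).
  by apply: measurable_funM => //; exact: measurable_cst.
rewrite -(ge0_integralZl_EFin mu measurableT (pE g g0) (mE g mg) a0).
rewrite -(ge0_integralZl_EFin mu measurableT (pE h h0) (mE h mh) b0).
rewrite -(ge0_integralD mu measurableT (pE _ ag0) (mE _ mag) (pE _ bh0) (mE _ mbh)).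
apply: ge0_le_integral.
- exact: measurableT.
- exact: pE.
- exact: mE.
- exact: emeasurable_funD (mE _ mag) (mE _ mbh).
- by move=> x _; rewrite -EFinD lee_fin.
Qed.

Lemma EFin_mexp (mu : {measure set T -> \bar R}) p q (F : T -> 'M[R]_(p, q)) a b :
  mu.-integrable setT (fun x => (F x a b)%:E) ->
  (mexp mu F a b)%:E = (\int[mu]_x (F x a b)%:E)%E.
Proof. by move=> iF; rewrite /mexp mxE /Rintegral fineK //; exact: integrable_fin_num iF. Qed.

Lemma mexp_mulmxr (mu : {measure set T -> \bar R}) p q r (F : T -> 'M[R]_(p, q))
    (N : 'M[R]_(q, r)) :
  (forall a b, mu.-integrable setT (fun x => (F x a b)%:E)) ->
  mexp mu (fun x => F x *m N) = mexp mu F *m N.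
Proof.
move=> iF; apply/matrixP => a c; apply: EFin_inj.
have iFN b : mu.-integrable setT (fun x => (F x a b)%:E * (N b c)%:E)%E.
  exact: integrableZr (iF a b).
have entry x : ((F x *m N) a c)%:E = (\sum_b (F x a b)%:E * (N b c)%:E)%E.
  by rewrite mxE -sumEFin; apply: eq_bigr => b _; rewrite EFinM.
have iFNac : mu.-integrable setT (fun x => ((F x *m N) a c)%:E).
  apply: (eq_integrable measurableT _ _ _ (integrable_sum measurableT _ (fun b _ => iFN b))).
  by move=> x _; rewrite entry.
rewrite (EFin_mexp iFNac) (eq_integral _ _ (fun x _ => entry x)) integral_sum //.
rewrite mxE -sumEFin; apply: eq_bigr => b _.
by rewrite (integralZr measurableT (iF a b)) EFinM (EFin_mexp (iF a b)).
Qed.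

End Integration.

Lemma sum_mexp_residual_eq0 {dS} {S : measurableType dS} {R : realType} n d
    (mu : 'I_n -> probability S R) (Phi : S -> 'M[R]_d) (thstar : 'I_n -> 'cV[R]_d)
    (thc : 'cV[R]_d) :
  (0 < n)%N -> (forall i a b, (mu i).-integrable setT (fun x => (Phi x a b)%:E)) ->
  (n%:R^-1 *: \sum_i mexp (mu i) Phi) *m thc = n%:R^-1 *: \sum_i (mexp (mu i) Phi *m thstar i) ->
  \sum_i mexp (mu i) (fun x => Phi x *m (thc - thstar i)) = 0.
Proof.
move=> n_gt0 iPhi thc_def.
have n0 : n%:R^-1 != 0 :> R by rewrite invr_neq0 // pnatr_eq0 -lt0n.
rewrite (eq_bigr _ (fun i _ => mexp_mulmxr (thc - thstar i) (iPhi i))).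
under eq_bigr do rewrite mulmxBr.
rewrite sumrB -mulmx_suml; apply/eqP; rewrite subr_eq0; apply/eqP.
by apply: (scalerI n0); rewrite scalemxAl.
Qed.

Section CentralGradient.
Context {dT : measure_display} {T : measurableType dT}.
Context {dS : measure_display} {S : measurableType dS} {R : realType} {n d : nat}.
Variables (Phi : S -> 'M[R]_d) (thstar : 'I_n -> 'cV[R]_d).
Hypothesis mPhi : measurable_mxfun Phi.

Lemma measurable_g0b (smp : 'I_n -> T -> S) (th : T -> 'cV[R]_d) :
  (forall i, measurable_fun setT (smp i)) -> measurable_mxfun th ->
  measurable_mxfun (fun w => g0b Phi thstar (fun i => smp i w) (th w)).
Proof.
move=> msmp mth; rewrite /g0b; apply: measurable_mxfunZ; apply: measurable_mxfun_sum => i.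
have mPs := measurable_mxfun_comp mPhi (msmp i).
by apply: measurable_mxfunB; apply: measurable_mxfunM => //; exact: measurable_mxfun_cst.
Qed.

Lemma measurable_theta_c (s : 'I_n -> nat -> T -> S) alpha theta0 t :
  (forall i k, measurable_fun setT (s i k)) ->
  measurable_mxfun (theta_c Phi thstar s alpha theta0 t).
Proof.
move=> ms; elim: t => [|t IH] /=; first exact: measurable_mxfun_cst.
apply: measurable_mxfunB => //; apply: measurable_mxfunZ.
exact: (measurable_g0b (fun i => ms i t) IH).
Qed.

Lemma g0b_second_moment_le (mu : {measure set T -> \bar R}) (smp : 'I_n -> T -> S)
    (th : T -> 'cV[R]_d) thc :
  (0 < n)%N -> (forall x, opnorm_le (Phi x) 1) ->
  (forall i, measurable_fun setT (smp i)) -> measurable_mxfun th ->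
  (\int[mu]_w (sqnorm (g0b Phi thstar (fun i => smp i w) (th w)))%:E <=
   2%:E * \int[mu]_w (sqnorm (th w - thc))%:E +
   (2 / n%:R ^+ 2)%:E * \int[mu]_w (sqnorm (\sum_i Phi (smp i w) *m (thc - thstar i)))%:E)%E.
Proof.
move=> n_gt0 Phi1 msmp mth.
have b_ge0 : 0 <= 2 / n%:R ^+ 2 :> R by rewrite divr_ge0 // exprn_ge0.
apply: (ge0_integral_le_lincomb mu (ler0n _ 2) b_ge0
  (measurable_sqnorm (measurable_g0b msmp mth))
  (measurable_sqnorm (measurable_mxfunB mth (measurable_mxfun_cst thc)))
  (measurable_sqnorm (measurable_mxfun_sum (fun i =>
     measurable_mxfunM (measurable_mxfun_comp mPhi (msmp i))
       (measurable_mxfun_cst (thc - thstar i)))))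
  (fun _ => sqnorm_ge0 _) (fun _ => sqnorm_ge0 _) (fun _ => sqnorm_ge0 _)).
by move=> w; exact: g0b_sqnorm_le.
Qed.

End CentralGradient.

Section Distributions.
Context {dT : measure_display} {T : measurableType dT} {R : realType}.

Lemma integral_has_distribution {dS} {S : measurableType dS} (P : probability T R)
    (X : T -> S) (mu : probability S R) (f : S -> R) (M : R) :
  measurable_fun setT X -> has_distribution P X mu ->
  measurable_fun setT f -> (forall x, `|f x| <= M) ->
  (\int[P]_w (f (X w))%:E = \int[mu]_x (f x)%:E)%E.
Proof.
move=> mX PX mf fM.
rewrite [RHS](eq_measure_integral (pushforward P X)); last first.
  by move=> A mA _; exact: esym (PX A mA).
rewrite integral_pushforward //; first exact/measurable_EFinP.
rewrite preimage_setT; exact: bounded_integrable _ (measurableT_comp mf mX) (fun w => fM (X w)).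
Qed.

Lemma integral_indep_mul {dS} {S : measurableType dS} (P : probability T R)
    (X Y : T -> S) (mu1 mu2 : probability S R) (f h : S -> R) (Mf Mh : R) :
  measurable_fun setT X -> measurable_fun setT Y ->
  has_distribution P X mu1 -> has_distribution P Y mu2 ->
  (forall A B, measurable A -> measurable B ->
     P (X @^-1` A `&` Y @^-1` B) = (P (X @^-1` A) * P (Y @^-1` B))%E) ->
  measurable_fun setT f -> measurable_fun setT h ->
  (forall x, `|f x| <= Mf) -> (forall x, `|h x| <= Mh) ->
  (\int[P]_w (f (X w) * h (Y w))%:E = \int[mu1]_x (f x)%:E * \int[mu2]_y (h y)%:E)%E.
Proof.
move=> mX mY PX PY XY mf mh fM hM.
pose Z w := (X w, Y w); pose F (z : S * S) := f z.1 * h z.2.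
have mZ : measurable_fun setT Z := measurable_fun_pair mX mY.
have mF : measurable_fun setT F.
  apply: measurable_funM; first exact: measurableT_comp mf measurable_fst.
  exact: measurableT_comp mh measurable_snd.
have FM z : `|F z| <= Mf * Mh by rewrite normrM; apply: ler_pM.
have PZ : has_distribution P Z (mu1 \x mu2)%E.
  move=> A mA; symmetry; apply: (product_measure_unique (m' := pushforward P Z)) => // B C mB mC.
  by have := XY B C mB mC; rewrite PX // PY // => <-.
transitivity (\int[P]_w (F (Z w))%:E)%E; first by [].
rewrite (integral_has_distribution mZ PZ mF FM).
rewrite -integral12_prod_meas1 /=; last exact: bounded_integrable _ mF FM.
rewrite /fubini_F /=.
have ih := bounded_integrable mu2 mh hM.
have -> : (fun x => \int[mu2]_y (F (x, y))%:E)%E = (fun x => (f x)%:E * \int[mu2]_y (h y)%:E)%E.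
  by apply/funext => x; rewrite /F -integralZl.
rewrite -(fineK (integrable_fin_num measurableT ih)) integralZr //.
exact: bounded_integrable _ mf fM.
Qed.

Lemma mutually_independent_pair {dS} {S : measurableType dS} {I : eqType}
    (P : probability T R) (X : I -> T -> S) i j :
  mutually_independent P X -> i != j -> forall A B, measurable A -> measurable B ->
  P (X i @^-1` A `&` X j @^-1` B) = (P (X i @^-1` A) * P (X j @^-1` B))%E.
Proof.
move=> indep ij A B mA mB; have ji : (j == i) = false by rewrite eq_sym (negbTE ij).
have := indep [:: i; j] (fun k => if k == i then A else B).
rewrite !big_cons !big_nil /= eqxx ji setIT mule1; apply; first by rewrite /= inE andbT.
by move=> k; rewrite !inE => /orP[] /eqP ->; rewrite ?eqxx ?ji.
Qed.

End Distributions.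

Lemma double_sum_diag_prod (R : comNzRingType) n (q m : 'I_n -> R) :
  \sum_i \sum_j (if i == j then q i else m i * m j) =
  (\sum_i m i) ^+ 2 + \sum_i (q i - m i ^+ 2).
Proof.
have row i : \sum_j (if i == j then q i else m i * m j) =
    m i * \sum_j m j + (q i - m i ^+ 2).
  transitivity (\sum_j (m i * m j + (if i == j then q i - m i ^+ 2 else 0))).
    by apply: eq_bigr => j _; case: eqP => [<-|_]; rewrite ?addr0 //; ring.
  rewrite big_split /= -mulr_sumr; congr (_ + _).
  rewrite (bigD1 i) //= eqxx big1 ?addr0 // => j.
  by rewrite eq_sym => /negbTE ->.
by rewrite (eq_bigr _ (fun i _ => row i)) big_split /= -mulr_suml expr2.
Qed.

Section SecondMoments.
Context {dT : measure_display} {T : measurableType dT} {R : realType}.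
Variable P : probability T R.

Lemma second_moment_sum_le n (Z : 'I_n -> T -> R) (M : R) :
  (forall i, measurable_fun setT (Z i)) -> (forall i w, `|Z i w| <= M) ->
  (forall i j, i != j -> (\int[P]_w (Z i w * Z j w)%:E =
                          \int[P]_w (Z i w)%:E * \int[P]_w (Z j w)%:E)%E) ->
  (\sum_i \int[P]_w (Z i w)%:E = 0)%E ->
  (\int[P]_w ((\sum_i Z i w) ^+ 2)%:E <= \sum_i \int[P]_w (Z i w ^+ 2)%:E)%E.
Proof.
move=> mZ ZM uncor mean0.
have iZ i : P.-integrable setT (fun w => (Z i w)%:E) := bounded_integrable P (mZ i) (ZM i).
have iZZ i j : P.-integrable setT (fun w => (Z i w * Z j w)%:E).
  apply: (bounded_integrable P (M := M * M)); first exact: measurable_funM.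
  by move=> w; rewrite normrM; apply: ler_pM.
pose m i := fine (\int[P]_w (Z i w)%:E).
pose q i := fine (\int[P]_w (Z i w * Z i w)%:E).
have Em i : (\int[P]_w (Z i w)%:E)%E = (m i)%:E.
  by rewrite fineK //; exact: integrable_fin_num (iZ i).
have EZZ i j : (\int[P]_w (Z i w * Z j w)%:E)%E = (if i == j then q i else m i * m j)%:E.
  have [<-|ij] := eqVneq i j; last by rewrite uncor // !Em EFinM.
  by rewrite fineK //; exact: integrable_fin_num (iZZ i i).
have m0 : \sum_i m i = 0.
  by apply: EFin_inj; rewrite -sumEFin; under eq_bigr do rewrite -Em; exact: mean0.
have sq w : ((\sum_i Z i w) ^+ 2)%:E = (\sum_i \sum_j (Z i w * Z j w)%:E)%E.
  rewrite expr2 mulr_suml -sumEFin; apply: eq_bigr => i _.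
  by rewrite mulr_sumr -sumEFin.
have -> : (\int[P]_w ((\sum_i Z i w) ^+ 2)%:E =
    (\sum_i \sum_j (if i == j then q i else m i * m j))%:E)%E.
  rewrite (eq_integral _ _ (fun w _ => sq w)) integral_sum //; last first.
    by move=> i; apply: integrable_sum => // j _; exact: iZZ.
  rewrite -sumEFin; apply: eq_bigr => i _; rewrite integral_sum //.
  by rewrite -sumEFin; apply: eq_bigr => j _; exact: EZZ.
have -> : (\sum_i \int[P]_w (Z i w ^+ 2)%:E = (\sum_i q i)%:E)%E.
  rewrite -sumEFin; apply: eq_bigr => i _.
  by have := EZZ i i; rewrite eqxx => <-; apply: eq_integral => w _; rewrite expr2.
rewrite lee_fin double_sum_diag_prod m0 expr2 mul0r add0r.
by apply: ler_sum => i _; rewrite gerBl sqr_ge0.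
Qed.

Lemma second_moment_sum_indep_le {dS} {S : measurableType dS} n d
    (X : 'I_n -> T -> S) (mu : 'I_n -> probability S R) (F : 'I_n -> S -> 'cV[R]_d) (K : R) :
  (forall i, measurable_fun setT (X i)) -> (forall i, has_distribution P (X i) (mu i)) ->
  (forall i j, i != j -> forall A B, measurable A -> measurable B ->
     P (X i @^-1` A `&` X j @^-1` B) = (P (X i @^-1` A) * P (X j @^-1` B))%E) ->
  (forall i, measurable_mxfun (F i)) -> (forall i x, sqnorm (F i x) <= K) ->
  \sum_i mexp (mu i) (F i) = 0 ->
  (\int[P]_w (sqnorm (\sum_i F i (X i w)))%:E <= (n%:R * K)%:E)%E.
Proof.
move=> mX PX indep mF FK mean0.
have FM i x k : `|F i x k 0| <= Num.sqrt K.
  rewrite -sqrtr_sqr; apply: ler_wsqrtr; exact: le_trans (sqr_entry_le_sqnorm _ _) (FK i x).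
pose Z k i w := F i (X i w) k 0.
have mZ k i : measurable_fun setT (Z k i) := measurableT_comp (mF i k 0) (mX i).
have lawZ k i : (\int[P]_w (Z k i w)%:E = \int[mu i]_x (F i x k 0)%:E)%E :=
  integral_has_distribution (mX i) (PX i) (mF i k 0) (FM i ^~ k).
have coord k :
    (\int[P]_w ((\sum_i Z k i w) ^+ 2)%:E <= \sum_i \int[P]_w (Z k i w ^+ 2)%:E)%E.
  apply: (second_moment_sum_le (mZ k) (fun i w => FM i (X i w) k)).
    move=> i j ij; rewrite !lawZ.
    exact: integral_indep_mul (mX i) (mX j) (PX i) (PX j) (indep i j ij)
      (mF i k 0) (mF j k 0) (FM i ^~ k) (FM j ^~ k).
  have Emu i : (\int[mu i]_x (F i x k 0)%:E)%E = (mexp (mu i) (F i) k 0)%:E.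
    exact: esym (EFin_mexp (bounded_integrable (mu i) (mF i k 0) (FM i ^~ k))).
  rewrite (eq_bigr _ (fun i _ => lawZ k i)) (eq_bigr _ (fun i _ => Emu i)).
  by rewrite sumEFin -summxE mean0 mxE.
have bound i : (\sum_k \int[P]_w (Z k i w ^+ 2)%:E <= K%:E)%E.
  have mZ2 k : measurable_fun setT (fun w => (Z k i w ^+ 2)%:E).
    by apply/measurable_EFinP/measurable_funX; exact: mZ.
  have Z2_ge0 k w : [set: T] w -> (0 <= (Z k i w ^+ 2)%:E)%E by rewrite lee_fin sqr_ge0.
  rewrite -ge0_integral_sum //; under eq_integral do rewrite sumEFin.
  apply: ge0_integral_le_cst; first by apply: measurable_sum => k; exact: measurable_funX.
  by move=> w; apply/andP; split; [exact: (sqnorm_ge0 (F i (X i w))) | exact: FK].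
have mZ2 k : measurable_fun setT (fun w => ((\sum_i Z k i w) ^+ 2)%:E).
  by apply/measurable_EFinP/measurable_funX/measurable_sum => i; exact: mZ.
have Z2_ge0 k w : [set: T] w -> (0 <= ((\sum_i Z k i w) ^+ 2)%:E)%E.
  by rewrite lee_fin sqr_ge0.
have sq w : (sqnorm (\sum_i F i (X i w)))%:E = (\sum_k ((\sum_i Z k i w) ^+ 2)%:E)%E.
  by rewrite /sqnorm -sumEFin; apply: eq_bigr => k _; rewrite summxE.
rewrite (eq_integral _ _ (fun w _ => sq w)) ge0_integral_sum //.
apply: le_trans (lee_sum _ (fun k _ => coord k)) _; rewrite exchange_big /=.
apply: le_trans (lee_sum _ (fun i _ => bound i)) _.
by rewrite sumEFin sumr_const card_ord mulr_natl.
Qed.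

End SecondMoments.

Theorem lemma7 (R : realType) (dT : measure_display) (T : measurableType dT)
  (P : probability T R) (dS : measure_display) (S : measurableType dS)
  (n d : nat) (mu : 'I_n -> probability S R)
  (Phi : S -> 'M[R]_d) (thstar : 'I_n -> 'cV[R]_d) (thc : 'cV[R]_d)
  (p q : nat) (A : S -> 'M[R]_(p, q)) (GA Gx Gb sigma : R)
  (s : 'I_n -> nat -> T -> S) (alpha : nat -> R) (theta0 : 'cV[R]_d) (t : nat) :
  (0 < n)%N ->
  (forall a b, measurable_fun setT (fun x => Phi x a b)) ->
  (forall x, opnorm_le (Phi x) 1) ->
  (let Phibar0 := n%:R^-1 *: \sum_(i < n) mexp (mu i) Phi in
   (forall x : 'cV[R]_d, x != 0 ->
      0 < ((x^T *m ((2%:R^-1) *: (Phibar0 + Phibar0^T))) *m x) 0 0) /\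
   let bbar0 := n%:R^-1 *: \sum_(i < n) (mexp (mu i) Phi *m thstar i) in
   Phibar0 *m thc = bbar0) ->
  Gb = Num.max (\big[Num.max/0]_(i < n) vnorm (thstar i)) (vnorm thc) ->
  (forall x, opnorm_le (A x) GA) ->
  0 <= Gx ->
  sigma = 2 * Num.max (GA * Gx) Gb ->
  (forall i k, measurable_fun setT (s i k)) ->
  (forall i k, has_distribution P (s i k) (mu i)) ->
  mutually_independent P (fun ik : 'I_n * nat => s ik.1 ik.2) ->
  let theta := theta_c Phi thstar s alpha theta0 t in
  (\int[P]_w ((vnorm (g0b Phi thstar (fun i => s i t w) (theta w))) ^+ 2)%:E <=
   2%:E * \int[P]_w ((vnorm (theta w - thc)) ^+ 2)%:E
   + (2 * sigma ^+ 2 / n%:R)%:E)%E.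
Proof.
move=> n_gt0 mPhi Phi1 hPhibar0 Gb_def _ _ -> ms s_law s_indep.
move: hPhibar0; cbv zeta => -[_ thc_def].
have thc_le : vnorm thc <= Gb by rewrite Gb_def le_max lexx orbT.
have thstar_le i : vnorm (thstar i) <= Gb.
  by rewrite Gb_def le_max (le_bigmax _ (fun i => vnorm (thstar i)) i).
have iPhi i a b : (mu i).-integrable setT (fun x => (Phi x a b)%:E).
  exact: bounded_integrable _ (mPhi a b) (fun x => opnorm_le_entry a b ler01 (Phi1 x)).
have noise_le : (\int[P]_w (sqnorm (\sum_i Phi (s i t w) *m (thc - thstar i)))%:E
    <= (n%:R * (4 * Gb ^+ 2))%:E)%E.
  apply: (second_moment_sum_indep_le (F := fun i x => Phi x *m (thc - thstar i))
    (fun i => ms i t) (fun i => s_law i t)).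
  - move=> i j ij; apply: (mutually_independent_pair (i := (i, t)) (j := (j, t)) s_indep).
    by rewrite xpair_eqE negb_and ij.
  - by move=> i; apply: measurable_mxfunM => //; exact: measurable_mxfun_cst.
  - move=> i x; apply: le_trans (sqnorm_mulmx_le _ ler01 (Phi1 x)) _.
    by rewrite expr1n mul1r; exact: sqnormB_le_bound thc_le (thstar_le i).
  - exact: sum_mexp_residual_eq0 n_gt0 iPhi thc_def.
have vnorm_sqrE (u : T -> 'cV[R]_d) :
    (\int[P]_w (vnorm (u w) ^+ 2)%:E = \int[P]_w (sqnorm (u w))%:E)%E.
  by apply: eq_integral => w _; rewrite vnorm_sqr.
rewrite !vnorm_sqrE; apply: le_trans (g0b_second_moment_le thstar mPhi P thc n_gt0 Phi1
  (fun i => ms i t) (measurable_theta_c thstar mPhi alpha theta0 t ms)) _.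
apply: leeD2l; apply: le_trans (lee_wpmul2l _ noise_le) _.
  by rewrite lee_fin divr_ge0 // exprn_ge0.
rewrite -EFinM lee_fin.
have n0 : n%:R != 0 :> R by rewrite pnatr_eq0 -lt0n.
have -> : 2 / n%:R ^+ 2 * (n%:R * (4 * Gb ^+ 2)) = 2 * (2 * Gb) ^+ 2 / n%:R by field.
rewrite ler_pM2r ?invr_gt0 ?ltr0n // ler_pM2l //.
have Gb_le : 2 * Gb <= 2 * Num.max (GA * Gx) Gb by rewrite ler_pM2l // le_max lexx orbT.
have Gb_ge0 : 0 <= 2 * Gb by rewrite mulr_ge0 // (le_trans (vnorm_ge0 thc) thc_le).
by apply: lerXn2r; rewrite ?nnegrE //; exact: le_trans Gb_ge0 Gb_le.
Qed.
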